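(* If $n>k\ge 3$, then $\mathrm{isat}(n,\mathcal{A}_{k+1})\ge 3n-1$.
   Context: $\mathcal{B}_n$ denotes the Boolean lattice $(2^{[n]},\subseteq)$. A family $\mathcal{F}\subseteq 2^{[n]}$ (ordered by inclusion) is induced-$\mathcal{P}$-saturated if it contains no induced copy of $\mathcal{P}$ (an injection $f$ with $u\le v\iff f(u)\subseteq f(v)$) but every family $\mathcal{F}'$ with $\mathcal{F}\subsetneq\mathcal{F}'\subseteq 2^{[n]}$ contains one. $\mathrm{isat}(n,\mathcal{P})$ is the minimum size of such a family. $\mathcal{A}_{m}$ is the $m$-element antichain. *)

From mathcomp Require Import all_boot.
Set Implicit Arguments. Unset Strict Implicit. Unset Printing Implicit Defensive.

(* A finite poset P is given by its carrier finType and its order relation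
   le : rel P (assumed to be a partial order by the user; for the antichain
   it is equality).  The Boolean lattice B_n is {set 'I_n} ordered by \subset. *)

Definition has_induced_copy (n : nat) (P : finType) (le : rel P)
    (F : {set {set 'I_n}}) : Prop :=
  exists f : P -> {set 'I_n},
    injective f /\ (forall u, f u \in F) /\
    (forall u v, le u v = (f u \subset f v)).

Definition induced_saturated (n : nat) (P : finType) (le : rel P)
    (F : {set {set 'I_n}}) : Prop :=
  ~ has_induced_copy le F /\
  (forall F' : {set {set 'I_n}}, F \proper F' -> has_induced_copy le F').

Definition antichain_le (m : nat) : rel 'I_m := fun u v => u == v.

(* isat(n,P) >= b  iff every induced-P-saturated family has size >= b
   (isat is the minimum size of such a family). *)
Definition isat_ge (n : nat) (P : finType) (le : rel P) (b : nat) : Prop :=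
  forall F : {set {set 'I_n}}, induced_saturated le F -> b <= #|F|.

From mathcomp Require Import all_boot zify.
Set Implicit Arguments. Unset Strict Implicit. Unset Printing Implicit Defensive.

(* A saturated family F contains no antichain of size k+1, so by Dilworth's
   theorem (here via Galvin's argument) it is covered by k chains, which can be
   taken maximal inside F.  Saturation yields a forcing principle: S belongs to F
   as soon as every member of some cover chain that is incomparable with S lies
   in another cover chain, for then S |: F is still covered by k chains.  Forcing
   makes every cover chain full, with one member e_r of each size 0 <= r <= n.
   Three cover chains give three distinct members of size 0 < r < n unless two of
   them share e_r; the sets obtained by swapping the elements added at steps r
   and r+1 of these chains are then forced, and either they differ or the two
   chains also share e_{r-1} and e_{r+1}, which forces one more set of size r.
   Counting by size gives |F| >= 1 + 3(n-1) + 1. *)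

(** * Chains and antichains of sets *)

Section SetFamilies.

Variable T : finType.
Implicit Types (X Y Z S : {set T}) (A B C K M P : {set {set T}}).

Definition comparable X Y := (X \subset Y) || (Y \subset X).

Definition chain C := [forall X in C, forall Y in C, comparable X Y].

Definition antichain A := [forall X in A, forall Y in A, (X \subset Y) ==> (X == Y)].

Definition width_le P m := forall A, A \subset P -> antichain A -> #|A| <= m.

Definition chain_coloring P m (g : {set T} -> nat) :=
  {in P, forall X, g X < m} /\ {in P &, forall X Y, g X = g Y -> comparable X Y}.

Lemma chainP C : reflect {in C &, forall X Y, comparable X Y} (chain C).
Proof.
apply: (iffP forall_inP) => [H X Y /H /forall_inP | H X /H ?]; first exact.
exact/forall_inP.
Qed.

Lemma antichainP A : reflect {in A &, forall X Y, X \subset Y -> X = Y} (antichain A).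
Proof.
apply: (iffP forall_inP) => [H X Y /H /forall_inP HX /HX /implyP sXY /sXY /eqP //|].
by move=> H X AX; apply/forall_inP => Y AY; apply/implyP => /(H X Y AX AY) ->.
Qed.

Lemma comparable_refl X : comparable X X.
Proof. by rewrite /comparable subxx. Qed.

Lemma comparable_sym X Y : comparable X Y = comparable Y X.
Proof. by rewrite /comparable orbC. Qed.

Lemma comparable_card_sub X Y : comparable X Y -> #|X| <= #|Y| -> X \subset Y.
Proof.
case/orP=> // sYX leXY.
by have/eqP-> : Y == X by rewrite eqEcard sYX leXY.
Qed.

Lemma antichain_comparable A : antichain A ->
  {in A &, forall X Y, comparable X Y -> X = Y}.
Proof.
by move=> /antichainP acA X Y AX AY /orP[/acA-> // | /acA eqYX]; rewrite eqYX.
Qed.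

Lemma chain_sub K C : K \subset C -> chain C -> chain K.
Proof.
by move=> /subsetP sKC /chainP chC; apply/chainP => X Y /sKC KX /sKC; apply: chC.
Qed.

Lemma chain_max C : chain C -> C != set0 -> exists2 X, X \in C & {in C, forall Y, Y \subset X}.
Proof.
move=> /chainP chC /set0Pn[X0 CX0].
case: (arg_maxnP (fun X => #|X|) CX0) => X CX maxX.
by exists X => // Y CY; apply: comparable_card_sub (chC _ _ CY CX) (maxX Y CY).
Qed.

Lemma chain_min C : chain C -> C != set0 -> exists2 X, X \in C & {in C, forall Y, X \subset Y}.
Proof.
move=> /chainP chC /set0Pn[X0 CX0].
case: (arg_minnP (fun X => #|X|) CX0) => X CX minX.
by exists X => // Y CY; apply: comparable_card_sub (chC _ _ CX CY) (minX Y CY).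
Qed.

Lemma antichain_card_le_cover (I : finType) (M : I -> {set {set T}}) B :
  (forall i, chain (M i)) -> antichain B -> B \subset \bigcup_i M i -> #|B| <= #|I|.
Proof.
move=> chM acB /subsetP sBM.
pose h Z := [pick i | Z \in M i].
have hB Z : Z \in B -> exists2 i, h Z = Some i & Z \in M i.
  move=> /sBM /bigcupP[i _ MZi]; rewrite /h.
  by case: pickP => [j MZj | /(_ i)]; [exists j | rewrite MZi].
have injh : {in B &, injective h}.
  move=> Z Z' BZ BZ' eqh; have [i hZ MZ] := hB Z BZ; have [i' hZ' MZ'] := hB Z' BZ'.
  move: hZ'; rewrite -eqh hZ => -[eqi]; rewrite -eqi in MZ'.
  by apply: (antichain_comparable acB) => //; move/chainP: (chM i); apply.
have -> : #|I| = #|[set Some i | i : I]| by rewrite card_imset ?cardsT //; exact: Some_inj.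
rewrite -(card_in_imset injh); apply: subset_leq_card; apply/subsetP => _ /imsetP[Z /hB[i -> _] ->].
by rewrite imset_f ?inE.
Qed.

Lemma coloring_hits_antichain P m g A c : chain_coloring P m g ->
  A \subset P -> antichain A -> #|A| = m -> c < m -> exists2 Z, Z \in A & g Z = c.
Proof.
move=> [ltg eqg] /subsetP sAP acA cardA ltcm.
have uniq_gA : uniq (map g (enum A)).
  rewrite map_inj_in_uniq ?enum_uniq // => X Y; rewrite !mem_enum => AX AY gXY.
  by apply: (antichain_comparable acA) => //; apply: eqg => //; apply: sAP.
have sub_gA : {subset map g (enum A) <= iota 0 m}.
  move=> y /mapP[X]; rewrite mem_enum => /sAP/ltg ltgX ->; by rewrite mem_iota.
have [|_ eq_gA] := uniq_min_size uniq_gA sub_gA.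
  by rewrite size_iota size_map -cardE cardA.
have : c \in map g (enum A) by rewrite eq_gA mem_iota.
by case/mapP=> Z; rewrite mem_enum => AZ ->; exists Z.
Qed.

Lemma chain_coloring_addchain P K m g : 0 < m -> chain K ->
  chain_coloring (P :\: K) m.-1 g ->
  chain_coloring P m (fun X => if X \in K then m.-1 else g X).
Proof.
move=> m_gt0 /chainP chK [ltg eqg]; have inPK X : X \in P -> X \notin K -> X \in P :\: K.
  by move=> PX KX; rewrite inE KX.
split=> [X PX | X Y PX PY]; first by case: ifP => [|/negbT/(inPK X PX)/ltg]; lia.
case: ifP => KX; case: ifP => KY; first by move=> _; apply: chK.
- by have := ltg Y (inPK Y PY (negbT KY)); lia.
- by have := ltg X (inPK X PX (negbT KX)); lia.
- exact: eqg (inPK X PX (negbT KX)) (inPK Y PY (negbT KY)).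
Qed.

(* Galvin's inductive step: with a of maximal size and P :\ a coloured, the
   largest member x c of colour c lying in a maximum antichain of P :\ a yields
   a chain through a whose removal lowers the width. *)
Section GalvinStep.

Variables (P : {set {set T}}) (a : {set T}) (m : nat) (g : {set T} -> nat).
Hypotheses (Pa : a \in P) (a_max : {in P, forall X, #|X| <= #|a|}).
Hypotheses (P_width : width_le P m) (g_col : chain_coloring (P :\ a) m g).

Let max_antichain A := [&& A \subset P :\ a, antichain A & #|A| == m].
Let top_class (c : nat) :=
  [set z in P :\ a | (g z == c) && [exists A, max_antichain A && (z \in A)]].

Lemma top_class_chain c : chain (top_class c).
Proof.
apply/chainP => X Y /setIdP[PX /andP[/eqP gX _]] /setIdP[PY /andP[/eqP gY _]].
by apply: (g_col.2 X Y PX PY); rewrite gX gY.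
Qed.

Lemma max_antichain_hit A c : max_antichain A -> c < m ->
  exists2 z, z \in A & z \in top_class c.
Proof.
move=> maxA ltcm; case/and3P: (maxA) => sAP acA /eqP cardA.
have [z Az gz] := coloring_hits_antichain g_col sAP acA cardA ltcm.
exists z; rewrite // inE (subsetP sAP z Az) gz eqxx /=.
by apply/existsP; exists A; rewrite maxA.
Qed.

Lemma width_le_setD1 :
  ~~ [exists A, max_antichain A] -> width_le (P :\: [set a]) m.-1.
Proof.
move=> noMax A sAP acA; have : #|A| <= m by apply/P_width/acA/(subset_trans sAP)/subsetDl.
suff : #|A| != m by lia.
by apply: contra noMax => cardA; apply/existsP; exists A; rewrite /max_antichain sAP acA.
Qed.

Let top_chain (x : 'I_m -> {set T}) (c : 'I_m) :=
  a |: [set z in P :\ a | (g z == c) && (z \subset x c)].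

Section Tops.

Variable x : 'I_m -> {set T}.
Hypothesis x_top : forall c, x c \in top_class c.
Hypothesis x_max : forall c : 'I_m, {in top_class c, forall z : {set T}, z \subset x c}.

Lemma top_sub_eq c d : x c \subset x d -> c = d.
Proof.
move=> sxcd; have := x_top d; rewrite inE => /and3P[_ /eqP gxd /existsP[A /andP[maxA Axd]]].
have [z Az topz] := max_antichain_hit maxA (ltn_ord c).
have zxd : z = x d.
  case/and3P: maxA => _ /antichainP acA _.
  exact: acA Az Axd (subset_trans (x_max topz) sxcd).
by apply: val_inj; move: topz; rewrite inE zxd gxd => /andP[_ /andP[/eqP]].
Qed.

Lemma exists_top_sub : exists c, x c \subset a.
Proof.
apply/existsP; apply: contraT => /existsPn no_sub; pose Xs := a |: [set x c | c : 'I_m].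
have xP c : x c \in P :\ a by have := x_top c; rewrite inE => /andP[].
have aXs : a \notin [set x c | c : 'I_m].
  by apply/imsetP => -[c _ eq_a]; have := xP c; rewrite -eq_a !inE eqxx.
have cardXs : #|Xs| = m.+1.
  rewrite cardsU1 aXs card_imset ?card_ord // => c d eqx.
  by apply: top_sub_eq; rewrite eqx.
have sXsP : Xs \subset P.
  rewrite subUset sub1set Pa; apply/subsetP => _ /imsetP[c _ ->].
  by have := xP c; rewrite inE => /andP[].
suff /(P_width sXsP) : antichain Xs by rewrite cardXs ltnn.
apply/antichainP => X Y; rewrite !inE.
move=> /orP[/eqP-> | /imsetP[c _ ->]] /orP[/eqP-> | /imsetP[d _ ->]] sXY //.
- have := xP d; rewrite !inE => /andP[neq Pxd]; case/negP: neq; apply/eqP.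
  by apply/esym/eqP; rewrite eqEcard sXY a_max.
- by have := no_sub c; rewrite sXY.
- by rewrite (top_sub_eq sXY).
Qed.

Lemma top_chain_chain c : x c \subset a -> chain (top_chain x c).
Proof.
move=> sxa; have sub_a Z : Z \in top_chain x c -> Z \subset a.
  by rewrite !inE => /orP[/eqP-> // | /andP[_ /andP[_ sZx]]]; apply: subset_trans sxa.
apply/chainP => X Y /[dup] KX /sub_a sXa /[dup] KY /sub_a sYa.
move: KX KY; rewrite !in_setU1 => /orP[/eqP-> | /setIdP[PX /andP[/eqP gX _]]].
  by rewrite /comparable sYa orbT.
move=> /orP[/eqP-> | /setIdP[PY /andP[/eqP gY _]]]; first by rewrite /comparable sXa.
by apply: (g_col.2 X Y PX PY); rewrite gX gY.
Qed.

Lemma width_le_setD_top_chain c : width_le (P :\: top_chain x c) m.-1.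
Proof.
move=> A sAPK acA; have sAP' : A \subset P :\ a.
  apply: subset_trans sAPK _; apply/subsetP => X.
  by rewrite !inE => /andP[/norP[nXa _] PX]; rewrite nXa PX.
have : #|A| <= m by exact: (P_width (subset_trans sAP' (subsetDl _ _)) acA).
suff : #|A| != m by lia.
apply/eqP => cardA; have maxA : max_antichain A by rewrite /max_antichain sAP' acA cardA eqxx.
have [z Az topz] := max_antichain_hit maxA (ltn_ord c).
have Kz : z \in top_chain x c.
  move: (topz) => /setIdP[Pz /andP[gz _]].
  by rewrite in_setU1 inE Pz gz (x_max topz) orbT.
by move: (subsetP sAPK z Az); rewrite inE Kz.
Qed.

End Tops.

Lemma galvin_step : exists K, [/\ a \in K, chain K & width_le (P :\: K) m.-1].
Proof.
case: (boolP [exists A, max_antichain A]) => [/existsP[A0 maxA0] | noMax]; last first.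
  exists [set a]; split; [exact: set11 | | exact: width_le_setD1].
  by apply/chainP => X Y; rewrite !inE => /eqP-> /eqP->; apply: comparable_refl.
have /fin_all_exists2[x x_top x_max] : forall c : 'I_m,
    exists2 X, X \in top_class c & {in top_class c, forall z : {set T}, z \subset X}.
  move=> c; apply: chain_max (top_class_chain c) _.
  by have [z _ topz] := max_antichain_hit maxA0 (ltn_ord c); apply/set0Pn; exists z.
have [c sxa] := exists_top_sub x_top x_max.
exists (top_chain x c); split; first exact: setU11.
  exact: top_chain_chain.
exact: width_le_setD_top_chain.
Qed.

End GalvinStep.

Lemma dilworth_coloring P m : width_le P m -> exists g, chain_coloring P m g.
Proof.
have [N] := ubnP #|P|; elim: N P m => // N IH P m /ltnSE leP P_width.
have [-> | [a0 Pa0]] := set_0Vmem P.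
  by exists (fun=> 0); split=> [X | X Y]; rewrite inE.
case: (arg_maxnP (fun X => #|X|) Pa0) => a Pa a_max.
have {}Pa : a \in P := Pa.
have ltPa : #|P :\ a| < N by move: leP; rewrite (cardsD1 a P) Pa.
have [g g_col] : exists g, chain_coloring (P :\ a) m g.
  apply: IH ltPa _ => A sAP; apply: P_width; exact: subset_trans sAP (subsetDl _ _).
have [K [Ka chK K_width]] := galvin_step Pa a_max P_width g_col.
have [g' g'_col] : exists g', chain_coloring (P :\: K) m.-1 g'.
  apply: IH K_width; apply: leq_ltn_trans ltPa; apply/subset_leq_card/subsetP => X.
  by rewrite !inE => /andP[KX ->]; rewrite andbT; apply: contraNneq KX => ->.
have m_gt0 : 0 < m.
  rewrite -(cards1 a); apply: P_width; first by rewrite sub1set.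
  by apply/antichainP => X Y; rewrite !inE => /eqP-> /eqP->.
by exists (fun X => if X \in K then m.-1 else g' X); apply: chain_coloring_addchain.
Qed.

Lemma dilworth P m : width_le P m -> exists C : 'I_m -> {set {set T}},
  [/\ forall i, C i \subset P, forall i, chain (C i) & P \subset \bigcup_i C i].
Proof.
move=> /dilworth_coloring[g [ltg eqg]]; exists (fun i : 'I_m => [set X in P | g X == i]).
split=> [i | i |]; first by apply/subsetP => X /setIdP[].
  apply/chainP => X Y /setIdP[PX /eqP gX] /setIdP[PY /eqP gY].
  by apply: eqg; rewrite // gX gY.
apply/subsetP => X PX; apply/bigcupP; exists (Ordinal (ltg X PX)) => //.
by rewrite inE PX /=.
Qed.

Lemma chain_extend_maximal (F C : {set {set T}}) : C \subset F -> chain C ->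
  exists M, [/\ C \subset M, M \subset F, chain M &
    {in F, forall Z : {set T}, {in M, forall X, comparable Z X} -> Z \in M}].
Proof.
move=> sCF chC; pose ok M := [&& C \subset M, M \subset F & chain M].
have okC : ok C by rewrite /ok subxx sCF chC.
case: (arg_maxnP (fun M => #|M|) okC) => M /and3P[sCM sMF chM] M_max.
exists M; split=> // Z FZ cmpZ; apply: contraT => MZ.
have : ok (Z |: M).
  rewrite /ok subUset sub1set FZ sMF (subset_trans sCM (subsetUr _ _)) /=.
  apply/chainP => X Y; rewrite !in_setU1.
  move=> /orP[/eqP-> | MX] /orP[/eqP-> | MY]; rewrite ?comparable_refl ?cmpZ //.
    by rewrite comparable_sym cmpZ.
  by move/chainP: chM; apply.
by move/M_max; rewrite cardsU1 MZ; lia.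
Qed.

Lemma exists_set_between X Y r : X \subset Y -> #|X| <= r <= #|Y| ->
  exists S, [/\ X \subset S, S \subset Y & #|S| = r].
Proof.
move=> sXY /andP[leXr lerY].
have : 0 < #|[set A : {set T} | A \subset Y :\: X & #|A| == r - #|X|]|.
  by rewrite cards_draws bin_gt0 cardsDS //; lia.
case/card_gt0P => A; rewrite inE => /andP[sAYX /eqP cardA].
exists (X :|: A); rewrite subsetUl subUset sXY (subset_trans sAYX (subsetDl _ _)).
split=> //; rewrite cardsU.
suff -> : X :&: A = set0 by rewrite cards0 cardA; lia.
apply/setP => z; rewrite !inE; apply/andP => -[Xz Az].
by have := subsetP sAYX z Az; rewrite inE Xz.
Qed.

Lemma chain_comparable_set C r : chain C -> r <= #|T| ->
  exists S, #|S| = r /\ {in C, forall X : {set T}, comparable X S}.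
Proof.
move=> chC leTr; pose Lo := [set X in C | #|X| <= r]; pose Hi := [set X in C | r <= #|X|].
have [chLo chHi] : chain Lo /\ chain Hi.
  by split; apply: chain_sub chC; apply/subsetP => X /setIdP[].
have lo_hi : {in Lo & Hi, forall X Y, X \subset Y}.
  move=> X Y /setIdP[CX leX] /setIdP[CY leY].
  by apply: comparable_card_sub; [move/chainP: chC; apply | lia].
have [X0 [leX0 Lo_X0 X0_Hi]] : exists X0,
    [/\ #|X0| <= r, {in Lo, forall X, X \subset X0} & {in Hi, forall Y, X0 \subset Y}].
  have [Lo0 | LoN] := eqVneq Lo set0.
    by exists set0; rewrite cards0 Lo0; split=> // X; rewrite ?inE ?sub0set.
  have [X0 LoX0 maxX0] := chain_max chLo LoN.
  by exists X0; split=> // [|Y HiY]; [case/setIdP: LoX0 | apply: lo_hi].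
have [Y0 [leY0 Hi_Y0 X0Y0]] : exists Y0,
    [/\ r <= #|Y0|, {in Hi, forall Y, Y0 \subset Y} & X0 \subset Y0].
  have [Hi0 | HiN] := eqVneq Hi set0.
    by exists setT; rewrite cardsT Hi0 subsetT; split=> // Y; rewrite inE.
  have [Y0 HiY0 minY0] := chain_min chHi HiN.
  by exists Y0; split=> //; [case/setIdP: HiY0 | apply: X0_Hi].
have [S [sX0S sSY0 cardS]] := exists_set_between X0Y0 (introT andP (conj leX0 leY0)).
exists S; split=> // X CX; rewrite /comparable.
case: (leqP #|X| r) => [leX | /ltnW leX].
  by rewrite (subset_trans (Lo_X0 X _) sX0S) // inE CX.
by rewrite (subset_trans sSY0 (Hi_Y0 X _)) ?orbT // inE CX.
Qed.

(* For levels e_a \subset e_b \subset e_c of a chain built by adding x_1, x_2, ...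
   one at a time, splice e_a e_b e_c = {x_1, ..., x_a, x_(b+1), ..., x_c}. *)
Definition splice X Y Z := X :|: (Z :\: Y).

Lemma card_splice X Y Z : X \subset Y -> Y \subset Z ->
  #|splice X Y Z| = #|X| + #|Z| - #|Y|.
Proof.
move=> sXY sYZ; rewrite cardsU cardsDS //.
have -> : X :&: (Z :\: Y) = set0.
  by apply/setP => z; rewrite !inE; case: (boolP (z \in X)) => // /(subsetP sXY) ->.
by have := subset_leq_card sYZ; rewrite cards0; lia.
Qed.

Lemma spliceIr X Y Z : X \subset Y -> splice X Y Z :&: Y = X.
Proof.
move=> sXY; apply/setP => z; rewrite !inE.
case: (boolP (z \in X)) => [/(subsetP sXY) -> // | _].
by case: (z \in Y); rewrite ?andbF.
Qed.

Lemma spliceUr X Y Z : X \subset Y -> Y \subset Z -> splice X Y Z :|: Y = Z.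
Proof.
move=> sXY sYZ; apply/setP => z; rewrite !inE.
case: (boolP (z \in Y)) => [Yz | nYz]; first by rewrite orbT (subsetP sYZ).
rewrite orbF /=; case: (boolP (z \in X)) => // Xz.
by case/negP: nYz; apply: (subsetP sXY).
Qed.

End SetFamilies.

Lemma three_le_card (T : finType) (A : {set T}) x y z : x \in A -> y \in A -> z \in A ->
  x != y -> x != z -> y != z -> 3 <= #|A|.
Proof.
move=> Ax Ay Az nxy nxz nyz.
have sA : x |: (y |: [set z]) \subset A by rewrite !subUset !sub1set Ax Ay Az.
apply: leq_trans (subset_leq_card sA).
by rewrite !cardsU1 cards1 !inE (negbTE nxy) (negbTE nxz) (negbTE nyz).
Qed.

Lemma card_by_size (T : finType) (F : {set {set T}}) :
  #|F| = \sum_(r < #|T|.+1) #|[set X in F | #|X| == r]|.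
Proof.
pose size_class (X : {set T}) : 'I_#|T|.+1 := inord #|X|.
rewrite -sum1_card (partition_big size_class xpredT) //=.
apply: eq_bigr => r _; rewrite -[#|[set _ in F | _]|]sum1_card; apply: eq_bigl => X.
rewrite inE /size_class.
congr (_ && _); apply/eqP/eqP => [<- | eqXr]; first by rewrite inordK // ltnS max_card.
by apply: val_inj; rewrite /= inordK eqXr.
Qed.

(** * Saturated families *)

Lemma induced_antichainP n m (F : {set {set 'I_n}}) :
  has_induced_copy (@antichain_le m) F <->
  exists A : {set {set 'I_n}}, [/\ A \subset F, antichain A & m <= #|A|].
Proof.
split=> [[f [f_inj [fF f_le]]] | [A [sAF acA leAm]]].
  exists (f @: setT); split; first by apply/subsetP => _ /imsetP[u _ ->].
    apply/antichainP => _ _ /imsetP[u _ ->] /imsetP[v _ ->].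
    by rewrite -f_le /antichain_le => /eqP->.
  by rewrite card_imset // cardsT card_ord.
have lt_m i : i < m -> i < size (enum A) by rewrite -cardE; lia.
have nth_A (i : 'I_m) : nth set0 (enum A) i \in A by rewrite -mem_enum mem_nth ?lt_m.
have nth_inj : injective (fun i : 'I_m => nth set0 (enum A) i).
  by move=> i j /eqP; rewrite nth_uniq ?enum_uniq ?lt_m // => /eqP/val_inj.
exists (fun i : 'I_m => nth set0 (enum A) i); do 2!split=> //.
  by move=> u; apply: (subsetP sAF).
move=> u v; rewrite /antichain_le; apply/eqP/idP => [-> // | sub_uv]; apply: nth_inj.
by move/antichainP: acA; apply.
Qed.

Section Saturated.

Variables (n k : nat) (F : {set {set 'I_n}}).
Hypothesis F_sat : induced_saturated (@antichain_le k.+1) F.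

Lemma saturated_width : width_le F k.
Proof.
move=> A sAF acA; rewrite leqNgt; apply/negP => ltkA.
by apply: F_sat.1; apply/induced_antichainP; exists A.
Qed.

Lemma saturated_forced (M : 'I_k -> {set {set 'I_n}}) S i :
  (forall j, chain (M j)) -> F \subset \bigcup_j M j ->
  {in M i, forall Z, ~~ comparable Z S -> exists2 j, j != i & Z \in M j} -> S \in F.
Proof.
move=> chM sFM escape; apply: contraT => FS.
have [A [sASF acA ltkA]] : exists A : {set {set 'I_n}},
    [/\ A \subset S |: F, antichain A & k.+1 <= #|A|].
  apply/induced_antichainP; apply: F_sat.2; rewrite properEneq subsetU1 andbT.
  by apply: contraNneq FS => ->; apply: setU11.
(* S and the members of M i comparable with S form a chain, so S |: F is still
   covered by k chains. *)
pose M' j := if j == i then S |: [set Z in M i | comparable Z S] else M j.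
have chM' j : chain (M' j).
  rewrite /M'; case: eqP => // _; apply/chainP => X Y; rewrite !in_setU1.
  move=> /orP[/eqP-> | /setIdP[MX cXS]] /orP[/eqP-> | /setIdP[MY cYS]].
  - exact: comparable_refl.
  - by rewrite comparable_sym.
  - exact: cXS.
  - by move/chainP: (chM i); apply.
suff /(antichain_card_le_cover chM' acA) : A \subset \bigcup_j M' j by rewrite card_ord; lia.
apply/subsetP => X /(subsetP sASF); rewrite in_setU1 => /orP[/eqP-> | FX].
  by apply/bigcupP; exists i; rewrite // /M' eqxx setU11.
have /bigcupP[j _ MjX] := subsetP sFM X FX.
have [eq_ji | ne_ji] := eqVneq j i; last by apply/bigcupP; exists j; rewrite // /M' (negbTE ne_ji).
rewrite eq_ji in MjX; have [cXS | /(escape X MjX)[j' ne_j'i Mj'X]] := boolP (comparable X S).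
  by apply/bigcupP; exists i; rewrite // /M' eqxx in_setU1 inE MjX cXS orbT.
by apply/bigcupP; exists j'; rewrite // /M' (negbTE ne_j'i).
Qed.

Lemma saturated_chain_cover : exists M : 'I_k -> {set {set 'I_n}},
  [/\ forall j, M j \subset F, forall j, chain (M j), F \subset \bigcup_j M j &
      forall j, {in F, forall Z, {in M j, forall X, comparable Z X} -> Z \in M j}].
Proof.
have [C [sCF chC sFC]] := dilworth saturated_width.
have /fin_all_exists[M M_spec] j := chain_extend_maximal (sCF j) (chC j).
exists M; split=> [j | j | | j]; try by case: (M_spec j).
apply: subset_trans sFC _; apply/bigcupsP => j _.
by apply: subset_trans (bigcup_sup j isT); case: (M_spec j).
Qed.

Section Levels.

Variable M : 'I_k -> {set {set 'I_n}}.
Hypotheses (M_sub : forall j, M j \subset F) (M_chain : forall j, chain (M j)).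
Hypothesis F_cover : F \subset \bigcup_j M j.
Hypothesis M_max : forall j, {in F, forall Z, {in M j, forall X, comparable Z X} -> Z \in M j}.

Lemma chain_level_exists j r : r <= n -> exists2 X, X \in M j & #|X| = r.
Proof.
move=> lern; have [|S [cardS cmpS]] := chain_comparable_set (M_chain j) (r := r).
  by rewrite card_ord.
have FS : S \in F by apply: (saturated_forced (i := j) M_chain F_cover) => Z /cmpS ->.
by exists S => //; apply: M_max => // X /cmpS; rewrite comparable_sym.
Qed.

Let card_le_n (Z : {set 'I_n}) : #|Z| <= n.
Proof. by have := max_card Z; rewrite card_ord. Qed.

(* set0 is a junk default: chain_level_exists makes the pick succeed for r <= n. *)
Let level j r := odflt set0 [pick X in M j | #|X| == r].

Lemma level_mem j r : r <= n -> level j r \in M j.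
Proof.
move=> lern; rewrite /level; case: pickP => [X /andP[] // | none].
by have [X MX cardX] := chain_level_exists j lern; have := none X; rewrite MX cardX eqxx.
Qed.

Lemma card_level j r : r <= n -> #|level j r| = r.
Proof.
move=> lern; rewrite /level; case: pickP => [X /andP[_ /eqP] // | none].
by have [X MX cardX] := chain_level_exists j lern; have := none X; rewrite MX cardX eqxx.
Qed.

Lemma sub_level j r Z : Z \in M j -> #|Z| <= r <= n -> Z \subset level j r.
Proof.
move=> MZ /andP[leZr lern]; apply: comparable_card_sub; last by rewrite card_level.
by move/chainP: (M_chain j); apply=> //; apply: level_mem.
Qed.

Lemma level_sub j r Z : Z \in M j -> r <= #|Z| -> level j r \subset Z.
Proof.
move=> MZ lerZ; have lern : r <= n := leq_trans lerZ (card_le_n Z).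
apply: comparable_card_sub; last by rewrite card_level.
by move/chainP: (M_chain j); apply=> //; apply: level_mem.
Qed.

Lemma level_mono j r s : r <= s <= n -> level j r \subset level j s.
Proof.
move=> /andP[lers lesn]; apply: sub_level; first exact: level_mem (leq_trans lers lesn).
by rewrite card_level ?lers // (leq_trans lers).
Qed.

Lemma level_card j Z : Z \in M j -> level j #|Z| = Z.
Proof.
by move=> MZ; apply/eqP; rewrite eqEcard level_sub //= card_level ?card_le_n.
Qed.

Lemma level_new j r : r < n -> exists2 x, x \in level j r.+1 & x \notin level j r.
Proof.
move=> ltrn; apply/subsetPn; apply: contraTN isT => sub.
by have := subset_leq_card sub; rewrite !card_level ?ltnn // ltnW.
Qed.

Local Notation L r := [set X in F | #|X| == r].

Let swap i r := splice (level i r.-1) (level i r) (level i r.+1).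

Lemma level_splice_mem i j a b c : j != i -> a <= b <= c -> a < c <= n ->
    (forall s, a < s < c -> level i s \in M j) ->
  splice (level i a) (level i b) (level i c) \in L (a + c - b).
Proof.
move=> ne_ji /andP[leab lebc] /andP[ltac lecn] mid.
have sab : level i a \subset level i b by apply: level_mono; rewrite leab (leq_trans lebc).
have sbc : level i b \subset level i c by apply: level_mono; rewrite lebc.
rewrite inE card_splice // !card_level ?eqxx ?andbT; [|lia..].
apply: (saturated_forced (i := i) M_chain F_cover) => Z MiZ ncmp.
exists j => //; rewrite -(level_card MiZ); apply: mid; apply/andP; split.
  rewrite ltnNge; apply: contra ncmp => leZa.
  by rewrite /comparable (subset_trans (sub_level MiZ _) (subsetUl _ _)) ?leZa //; lia.
rewrite ltnNge; apply: contra ncmp => lecZ.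
rewrite /comparable (subset_trans _ (level_sub MiZ lecZ)) ?orbT //.
by rewrite /splice subUset subsetDl andbT (subset_trans sab sbc).
Qed.

Lemma level_mem_L j r : r <= n -> level j r \in L r.
Proof.
move=> lern; rewrite inE (card_level _ lern) eqxx andbT.
exact: subsetP (M_sub j) _ (level_mem _ lern).
Qed.

Lemma swap_level_mem i j r : j != i -> level i r = level j r -> 0 < r < n ->
  swap i r \in L r.
Proof.
move=> ne_ji eq_ij /andP[r_gt0 ltrn].
have := @level_splice_mem i j r.-1 r r.+1 ne_ji; rewrite (_ : r.-1 + r.+1 - r = r); last lia.
apply; [lia | lia | move=> s lts].
have -> : s = r by lia.
by rewrite eq_ij level_mem // ltnW.
Qed.

Lemma swap_level_neq i r : r < n -> swap i r != level i r.
Proof.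
move=> ltrn; have [y y1 y0] := level_new i ltrn.
by apply: contraNneq (y0) => <-; rewrite !inE y0 y1 orbT.
Qed.

Lemma third_level_set i j r : j != i -> 0 < r < n -> 2 < n ->
    level i r.-1 \in M j -> level i r \in M j -> level i r.+1 \in M j ->
  exists2 S, S \in L r & (S != level i r) && (S != swap i r).
Proof.
move=> ne_ji /andP[r_gt0 ltrn] n_gt2 Mj_pred Mj_r Mj_succ.
have lev_sub r1 r2 : r1 <= r2 <= n -> {subset level i r1 <= level i r2}.
  by move=> le12; apply/subsetP/level_mono.
(* With level i s = {x_1, ..., x_s}, take {x_1, ..., x_(r-2), x_r, x_(r+1)}
   if 2 <= r, and {x_3} if r = 1. *)
case: (leqP 2 r) => [r_ge2 | r_lt2].
  set S := splice (level i r.-2) (level i r.-1) (level i r.+1).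
  exists S.
    have := @level_splice_mem i j r.-2 r.-1 r.+1 ne_ji.
    rewrite (_ : r.-2 + r.+1 - r.-1 = r); last lia.
    apply; [lia | lia | move=> s lts].
    by have [-> | ->] : s = r.-1 \/ s = r by lia.
  have [y y_succ y_r] := level_new i ltrn.
  have [x x_r x_pred] := level_new i (ltac:(lia) : r.-1 < n).
  rewrite prednK // in x_r.
  have yS : y \in S.
    rewrite !inE y_succ andbT; apply/orP; right; apply: contra y_r.
    by apply: lev_sub; lia.
  have x_succ : x \in level i r.+1 by apply: lev_sub x_r; lia.
  have xS : x \in S by rewrite !inE x_pred x_succ orbT.
  apply/andP; split; apply/eqP => eqS.
    by move: yS; rewrite eqS (negbTE y_r).
  by move: xS; rewrite eqS !inE x_r (negbTE x_pred).
set S := splice (level i r.-1) (level i r.+1) (level i r.+2).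
exists S.
  have := @level_splice_mem i j r.-1 r.+1 r.+2 ne_ji.
  rewrite (_ : r.-1 + r.+2 - r.+1 = r); last lia.
  apply; [lia | lia | move=> s lts].
  by have [-> | ->] : s = r \/ s = r.+1 by lia.
have [z z_2 z_1] := level_new i (ltac:(lia) : r.+1 < n).
have zS : z \in S by rewrite !inE z_2 z_1 orbT.
have z_r : z \notin level i r by apply: contra z_1; apply: lev_sub; lia.
have z_pred : z \notin level i r.-1 by apply: contra z_1; apply: lev_sub; lia.
apply/andP; split; apply/eqP => eqS; move: zS; rewrite eqS ?(negbTE z_r) //.
by rewrite !inE (negbTE z_pred) (negbTE z_1) andbF.
Qed.

Lemma shared_level_three i j r : i != j -> level i r = level j r -> 0 < r < n -> 2 < n ->
  3 <= #|L r|.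
Proof.
move=> ne_ij eq_ij r_range n_gt2; have /andP[r_gt0 ltrn] := r_range.
have ne_ji : j != i by rewrite eq_sym.
have LX : level i r \in L r := level_mem_L i (ltnW ltrn).
have Ls_i : swap i r \in L r := swap_level_mem ne_ji eq_ij r_range.
have Ls_j : swap j r \in L r := swap_level_mem ne_ij (esym eq_ij) r_range.
have ne_si : level i r != swap i r by rewrite eq_sym swap_level_neq.
have [eq_s | ne_s] := eqVneq (swap i r) (swap j r); last first.
  by apply: (three_le_card LX Ls_i Ls_j) => //; rewrite eq_ij eq_sym swap_level_neq.
have sub_pred h : level h r.-1 \subset level h r by apply: level_mono; lia.
have sub_succ h : level h r \subset level h r.+1 by apply: level_mono; lia.
(* Equal swaps recover the shared neighbouring levels by meet and join with level r. *)
have eq_pred : level i r.-1 = level j r.-1.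
  rewrite -(spliceIr (level i r.+1) (sub_pred i)) -(spliceIr (level j r.+1) (sub_pred j)).
  by congr (_ :&: _).
have eq_succ : level i r.+1 = level j r.+1.
  rewrite -(spliceUr (sub_pred i) (sub_succ i)) -(spliceUr (sub_pred j) (sub_succ j)).
  by congr (_ :|: _).
have [|||S LS /andP[ne_SX ne_Ss]] := third_level_set ne_ji r_range n_gt2.
- by rewrite eq_pred level_mem //; lia.
- by rewrite eq_ij level_mem //; lia.
- by rewrite eq_succ level_mem.
by apply: three_le_card LX Ls_i LS ne_si _ _; rewrite eq_sym.
Qed.

Lemma three_le_card_level r : 2 < k -> 2 < n -> 0 < r < n -> 3 <= #|L r|.
Proof.
move=> k_gt2 n_gt2 r_range; have lern : r <= n by case/andP: r_range => _ /ltnW.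
have [k_gt0 k_gt1] : 0 < k /\ 1 < k by lia.
pose i0 := Ordinal k_gt0; pose i1 := Ordinal k_gt1; pose i2 := Ordinal k_gt2.
have [e01 | ne01] := eqVneq (level i0 r) (level i1 r).
  exact: shared_level_three _ e01 r_range n_gt2.
have [e02 | ne02] := eqVneq (level i0 r) (level i2 r).
  exact: shared_level_three _ e02 r_range n_gt2.
have [e12 | ne12] := eqVneq (level i1 r) (level i2 r).
  exact: shared_level_three _ e12 r_range n_gt2.
exact: three_le_card (level_mem_L i0 lern) (level_mem_L i1 lern) (level_mem_L i2 lern)
  ne01 ne02 ne12.
Qed.

End Levels.

End Saturated.

Lemma sum_levels_lower_bound (f : nat -> nat) n : 0 < n -> 0 < f 0 -> 0 < f n ->
  (forall r, 0 < r < n -> 3 <= f r) -> 3 * n - 1 <= \sum_(r < n.+1) f r.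
Proof.
case: n => // n _ f0_gt0 fn_gt0 f_mid; rewrite big_ord_recr big_ord_recl /=.
have mid : 3 * n <= \sum_(i < n) f (bump 0 i).
  rewrite mulnC -{1}(card_ord n) -sum_nat_const; apply: leq_sum => i _.
  by apply: f_mid; have := ltn_ord i; rewrite /bump; lia.
by apply: leq_trans (leq_add (leq_add f0_gt0 mid) fn_gt0); lia.
Qed.

Theorem proposition3p2 (n k : nat) (hk : 3 <= k) (hnk : k < n) :
  isat_ge n (@antichain_le k.+1) (3 * n - 1).
Proof.
move=> F F_sat; have [M [M_sub M_chain F_cover M_max]] := saturated_chain_cover F_sat.
have k_gt0 : 0 < k by lia.
have level_nonempty r : r <= n -> 0 < #|[set X in F | #|X| == r]|.
  move=> lern; pose j0 := Ordinal k_gt0.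
  have [X MX cardX] := chain_level_exists F_sat M_chain F_cover M_max j0 lern.
  by apply/card_gt0P; exists X; rewrite inE (subsetP (M_sub j0)) // cardX eqxx.
rewrite (card_by_size F) card_ord.
apply: (sum_levels_lower_bound (f := fun r => #|[set X in F | #|X| == r]|)).
- lia.
- exact: level_nonempty.
- exact: level_nonempty.
move=> r r_range; have n_gt2 : 2 < n by lia.
exact: (three_le_card_level F_sat M_sub M_chain F_cover M_max hk n_gt2 r_range).
Qed.
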